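(* Let $b\in\mathbb{R}$, $c>0$, $n\in\mathbb{N}$, and $R_b(x)=\sum_{i=1}^n x_i\ln x_i+b\sum_{i=1}^n x_i$ for $x\in[0,+\infty)^n$ (with $0\ln0=0$). If $b+\ln c-\ln n>1$, then $$\mathrm{Vol}\big(\{x\in[0,+\infty)^n: R_b(x)<c\}\big)\le\frac{1}{n!\,n}\cdot\frac{2^nc^n}{(b+\ln c-\ln n)^n}.$$ *)

From HB Require Import structures.
From mathcomp Require Import all_boot all_order all_algebra.
From mathcomp Require Import all_classical all_reals all_analysis.
Set Implicit Arguments. Unset Strict Implicit. Unset Printing Implicit Defensive.
Import Order.TTheory GRing.Theory Num.Theory.
Local Open Scope classical_set_scope.
Local Open Scope ring_scope.

Definition box (R : realType) (n : nat) (a b : 'I_n -> R) : set ('I_n -> R) :=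
  [set x | forall i, a i <= x i <= b i].

(* elementary volume of the box; the covers below require a i <= b i *)
Definition box_vol (R : realType) (n : nat) (a b : 'I_n -> R) : R :=
  \prod_(i < n) (b i - a i).

(* n-dimensional Lebesgue (outer) measure: infimum of the total volume of
   countable covers by closed boxes. On Lebesgue-measurable sets this is the
   Lebesgue measure Vol. *)
Definition Vol (R : realType) (n : nat) (A : set ('I_n -> R)) : \bar R :=
  ereal_inf [set v : \bar R | exists (a b : nat -> 'I_n -> R),
     [/\ forall k i, a k i <= b k i,
         A `<=` \bigcup_k box (a k) (b k) &
         v = (\sum_(0 <= k <oo) (box_vol (a k) (b k))%:E)%E]].

Definition xlnx (R : realType) (t : R) : R := if t == 0 then 0 else t * ln t.

Definition Rb (R : realType) (n : nat) (b : R) (x : 'I_n -> R) : R :=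
  \sum_(i < n) xlnx (x i) + b * \sum_(i < n) x i.

(* By Jensen's inequality for x ln x, R_b(x) >= s (ln (s/n) + b) where s is the coordinate
   sum of x; this confines the sublevel set {R_b < c} to the simplex {x >= 0, s < t} with
   t = (69/50) c / L and L = b + ln c - ln n, where 69/50 > 1 + 1/e makes the estimate work
   for every L > 1.  The simplex is covered by the 'C(n + m, n) grid cubes of side t/m whose
   corners have coordinate sum at most m; for m = 230 n this yields
   Vol <= ((693/500) c / L)^n / n!, and n (693/500)^n <= 2^n. *)

From HB Require Import structures.
From mathcomp Require Import all_boot all_order all_algebra.
From mathcomp Require Import all_classical all_reals all_analysis.
From mathcomp Require Import ring lra.
Import Order.TTheory GRing.Theory Num.Theory.
Local Open Scope classical_set_scope.
Local Open Scope ring_scope.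

Lemma bin_fact_leq_expn n m : ('C(n + m, n) * n`! <= (n + m) ^ n)%N.
Proof.
rewrite bin_ffact ffact_prod.
have -> : ((n + m) ^ n = \prod_(i < n) (n + m))%N by rewrite prod_nat_const card_ord.
by apply: leq_prod => i _; apply: leq_subr.
Qed.

Section GridCover.
Context {R : realType} {n : nat}.

Lemma Vol_le_cubes (s : seq ('I_n -> R)) (h : R) (A : set ('I_n -> R)) :
  (0 < n)%N -> 0 <= h ->
  (forall x, A x -> exists2 p, p \in s & box p (fun i => p i + h) x) ->
  (Vol A <= ((size s)%:R * h ^+ n)%:E)%E.
Proof.
move=> n0 h0 cover.
pose a k := nth (fun=> 0) s k.
(* past the end of s the boxes degenerate to points, of volume 0^n = 0 since n > 0 *)
pose b k i := a k i + (if (k < size s)%N then h else 0).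
have vol_ab k : box_vol (a k) (b k) = if (k < size s)%N then h ^+ n else 0.
  rewrite /box_vol /b; under eq_bigr do rewrite (addrC (a k _)) addrK.
  by rewrite prodr_const card_ord; case: ifP => // _; rewrite expr0n gtn_eqF.
apply: (@le_trans _ _ (\sum_(0 <= k <oo) (box_vol (a k) (b k))%:E)%E).
  apply: ereal_inf_lbound; exists a, b; split => //.
    by move=> k i; rewrite /b lerDl; case: ifP.
  move=> x /cover [p ps xp]; exists (index p s) => //.
  by rewrite /b /a index_mem ps nth_index.
rewrite (@nneseries_split R _ 0 (size s)); last first.
  by move=> k _; rewrite lee_fin vol_ab; case: ifP => // _; apply: exprn_ge0.
rewrite eseries0 => [|k]; last by rewrite add0n vol_ab leqNgt => /negbTE ->.
rewrite adde0 sumEFin lee_fin add0n big_mkord.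
under eq_bigr => k _ do rewrite vol_ab ltn_ord.
by rewrite sumr_const card_ord mulr_natl.
Qed.

Lemma simplex_sub_grid_cubes (m : nat) (h : R) (x : 'I_n -> R) :
  0 < h -> (forall i, 0 <= x i) -> \sum_i x i < m%:R * h ->
  exists2 p : n.-tuple 'I_m.+1, (\sum_(j <- p) j <= m)%N &
    box (fun i => (tnth p i)%:R * h) (fun i => (tnth p i)%:R * h + h) x.
Proof.
move=> h0 x0 sum_lt.
have cell i := truncn_itv (divr_ge0 (x0 i) (ltW h0)).
have sum_cells : (\sum_i Num.truncn (x i / h) < m)%N.
  rewrite -(ltr_nat R) natr_sum; apply: le_lt_trans (_ : (\sum_i x i) / h < _).
    by rewrite mulr_suml; apply: ler_sum => i _; case/andP: (cell i).
  by rewrite ltr_pdivrMr.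
have cell_le i : (Num.truncn (x i / h) <= m)%N.
  apply: leq_trans (ltnW sum_cells).
  by rewrite (bigD1 i) //= leq_addr.
exists [tuple inord (Num.truncn (x i / h)) | i < n].
  rewrite big_tuple; under eq_bigr do rewrite tnth_mktuple inordK ?ltnS ?cell_le //.
  exact: ltnW.
move=> i; rewrite tnth_mktuple inordK ?ltnS ?cell_le //.
have /andP[lo hi] := cell i.
by rewrite -ler_pdivlMr // lo -[X in _ + X]mul1r -mulrDl natr1 -ler_pdivrMr // ltW.
Qed.

Lemma Vol_sub_simplex_le (m : nat) (t : R) (A : set ('I_n -> R)) :
  (0 < n)%N -> (0 < m)%N -> 0 < t ->
  A `<=` [set x | (forall i, 0 <= x i) /\ \sum_i x i < t] ->
  (Vol A <= (((m + n)%:R / m%:R * t) ^+ n / n`!%:R)%:E)%E.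
Proof.
move=> n0 m0 t0 sub.
have m0' : 0 < m%:R :> R by rewrite ltr0n.
set h := t / m%:R; have h0 : 0 < h by exact: divr_gt0.
set grid := [set p : n.-tuple 'I_m.+1 | (\sum_(j <- p) j <= m)%N]%SET.
pose corners := [seq (fun i => (tnth p i)%:R * h) | p : n.-tuple 'I_m.+1 <- enum grid].
apply: le_trans (@Vol_le_cubes corners h A n0 (ltW h0) _) _.
  move=> x /sub [x0 sum_lt].
  have [|p pgrid xp] := simplex_sub_grid_cubes m h x h0 x0.
    by rewrite /h mulrC divfK ?gt_eqF.
  by exists (fun i => (tnth p i)%:R * h); rewrite ?map_f ?mem_enum ?inE.
rewrite size_map -cardE card_partial_ord_partitions lee_fin.
have fact0 : 0 < n`!%:R :> R by rewrite ltr0n fact_gt0.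
have -> : (m + n)%:R / m%:R * t = (m + n)%:R * h by rewrite /h; ring.
rewrite ler_pdivlMr // mulrAC -natrM [X in _ <= X]exprMn.
apply: ler_wpM2r; first by rewrite exprn_ge0 // ltW.
by rewrite -natrX ler_nat [(m + n)%N]addnC bin_fact_leq_expn.
Qed.

End GridCover.

Lemma ln_le_subr1 (R : realType) (y : R) : 0 < y -> ln y <= y - 1.
Proof.
by move=> y0; have := @le_ln1Dx R (y - 1); rewrite (addrC 1) subrK; apply; lra.
Qed.

(* e >= (1 + 1/15)^15 > 50/19 *)
Lemma expR1_ge (R : realType) : 50/19 <= expR (1 : R).
Proof.
rewrite [X in expR X](_ : _ = 15%:R * 15%:R^-1); last by rewrite mulfV.
rewrite expRM_natl.
apply: le_trans (_ : (1 + 15%:R^-1) ^+ 15 <= _); last first.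
  by apply: lerXn2r; rewrite ?nnegrE ?expR_ge0 ?expR_ge1Dx.
lra.
Qed.

(* 19/50 is a rational upper bound for 1/e, the optimal slope *)
Lemma ln_le_lin (R : realType) (r : R) : 0 < r -> ln r <= 19/50 * r.
Proof.
move=> r0.
have ln_small : ln (19/50 * r) <= 19/50 * r - 1 by apply: ln_le_subr1; lra.
have ln_e_ge : ln (50/19 : R) <= 1.
  by rewrite -[leRHS](expRK 1) ler_ln ?posrE ?expR_gt0 ?expR1_ge //; lra.
have -> : ln r = ln (50/19) + ln (19/50 * r).
  by rewrite -lnM ?posrE; [congr ln; field | lra | lra].
lra.
Qed.

Lemma le_scale_add_ln (R : realType) (L : R) :
  0 < L -> L <= 69/50 * (L + ln (69/50) - ln L).
Proof.
move=> L0; have := @ln_le_lin R (L / (69/50)) ltac:(apply: divr_gt0; lra).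
rewrite ln_div ?posrE; [|lra|lra].
have -> : 19/50 * (L / (69/50)) = 19/69 * L :> R by field.
lra.
Qed.

Lemma xlnx_ge_tangent (R : realType) (y a : R) : 0 <= y -> 0 < a ->
  y * ln a + y - a <= xlnx y.
Proof.
move=> y0 a0; rewrite /xlnx.
have [->|yn0] := eqVneq y 0; first by rewrite mul0r; lra.
have yp : 0 < y by rewrite lt_def yn0.
have := @ln_le_subr1 R (a / y) (divr_gt0 a0 yp).
rewrite ln_div ?posrE // => ln_ratio.
have : y * (ln a - ln y) <= y * (a / y - 1) by rewrite ler_wpM2l // ltW.
have -> : y * (a / y - 1) = a - y by field; rewrite gt_eqF.
lra.
Qed.

Lemma sum_xlnx_ge (R : realType) (n : nat) (x : 'I_n -> R) :
  (0 < n)%N -> (forall i, 0 <= x i) -> 0 < \sum_i x i ->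
  (\sum_i x i) * ln ((\sum_i x i) / n%:R) <= \sum_i xlnx (x i).
Proof.
move=> n0 x0 s0; set s := \sum_i x i.
have n0' : 0 < n%:R :> R by rewrite ltr0n.
apply: le_trans (_ : \sum_i (x i * ln (s / n%:R) + x i - s / n%:R) <= _); last first.
  by apply: ler_sum => i _; apply: xlnx_ge_tangent => //; apply: divr_gt0.
rewrite big_split /= big_split /= -mulr_suml sumrN sumr_const card_ord.
by rewrite -/s -[s / n%:R *+ n]mulr_natr divfK ?gt_eqF //; lra.
Qed.

Lemma sum_lt_of_Rb_lt (R : realType) (b c : R) (n : nat) (x : 'I_n -> R) :
  (0 < n)%N -> 0 < c -> 1 < b + ln c - ln n%:R ->
  (forall i, 0 <= x i) -> Rb b x < c ->
  \sum_i x i < 69/50 * c / (b + ln c - ln n%:R).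
Proof.
move=> n0 c0 L1 x0 Rb_lt; set L := b + ln c - ln n%:R in L1 *.
rewrite ltNge; apply/negP; set s := \sum_i x i; set t := 69/50 * c / L => t_le_s.
have t0 : 0 < t by apply: divr_gt0 => //; lra.
have s0 : 0 < s by lra.
have n0' : 0 < n%:R :> R by rewrite ltr0n.
have Rb_ge : s * (ln s - ln n%:R + b) <= Rb b x.
  have := @sum_xlnx_ge R n x n0 x0 s0; rewrite ln_div ?posrE // /Rb -/s; lra.
set G := L + ln (69/50) - ln L.
have lnt : ln t - ln n%:R + b = G.
  by rewrite /t ln_div ?posrE ?[ln (_ * c)]lnM ?posrE /G; [rewrite /L; lra | lra..].
have G_ge : L <= 69/50 * G by apply: le_scale_add_ln; lra.
have c_le : c <= t * G.
  have -> : t * G = c * (69/50 * G) / L by rewrite /t; field; rewrite gt_eqF //; lra.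
  by rewrite ler_pdivlMr ?ler_wpM2l //; lra.
have : t * G <= s * (ln s - ln n%:R + b).
  rewrite -lnt; apply: ler_pM; [lra | rewrite lnt; lra | lra |].
  by rewrite lerD2r lerD2r ler_ln ?posrE.
lra.
Qed.

Lemma natr_mul_exp_le_exp2 (R : realType) (n : nat) :
  n%:R * (693/500 : R) ^+ n <= 2 ^+ n.
Proof.
elim: n => [|n IH]; first by rewrite mul0r expr0.
have [n_le2|n_gt2] := leqP n 2.
  by case: n n_le2 IH => [|[|[|]]] // _ _; rewrite /=; lra.
have pow_ge0 : 0 <= (693/500 : R) ^+ n by apply: exprn_ge0; lra.
have n_ge3 : 3 <= n%:R :> R by rewrite (ler_nat R 3 n).
rewrite !exprS -natr1; nra.
Qed.


Theorem lemma12 (R : realType) (b c : R) (n : nat) :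
  (0 < n)%N -> 0 < c ->
  b + ln c - ln n%:R > 1 ->
  (Vol [set x : 'I_n -> R | (forall i, (0 <= x i)%R) /\ (Rb b x < c)%R]
   <= ((n`! * n)%:R^-1 * ((2 ^+ n * c ^+ n) / (b + ln c - ln n%:R) ^+ n))%:E)%E.
Proof.
move=> n0 c0 L1; set L := b + ln c - ln n%:R in L1 *.
have L0 : 0 < L by lra.
have n0' : 0 < n%:R :> R by rewrite ltr0n.
have t0 : 0 < 69/50 * c / L by apply: divr_gt0 => //; lra.
apply: le_trans (Vol_sub_simplex_le (230 * n) _ _ n0 _ t0 _) _.
- by rewrite muln_gt0.
- by move=> x [x0 Rb_lt]; split => //; apply: sum_lt_of_Rb_lt.
have -> : (230 * n + n)%:R / (230 * n)%:R * (69/50 * c / L) = 693/500 * (c / L).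
  by rewrite natrD natrM; field; rewrite !gt_eqF.
rewrite lee_fin natrM invfM -[_ / L ^+ n]mulrA -expr_div_n exprMn.
rewrite [leLHS]mulrC -!mulrA ler_wpM2l ?invr_ge0 ?ler0n // mulrA.
rewrite ler_wpM2r ?exprn_ge0 // ?divr_ge0 ?(ltW c0) ?(ltW L0) //.
by rewrite ler_pdivlMl // natr_mul_exp_le_exp2.
Qed.
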